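(* Let $V$ be a commutative unital quantale whose underlying lattice is a frame. The category $\mathsf{VGrp}$ is efficiently regular: it is regular and, whenever $R$ is an effective equivalence relation on an object $X$ and $T$ is another equivalence relation on $X$ such that there is a regular monomorphism $j\colon T\rightarrowtail R$ in $\mathsf{VGrp}$ (compatible with the projections to $X$), then $T$ is itself effective.
   Context: A commutative unital quantale $V$ is a complete lattice with a commutative associative operation $\otimes$ with unit $k$ preserving arbitrary joins in each variable; standing assumption: as a lattice $V$ is a frame. A $V$-category $(X,a)$: $a\colon X\times X\to V$ with $k\le a(x,x)$ and $a(x,x')\otimes a(x',x'')\le a(x,x'')$. A $V$-group $(X,a,+)$ is a $V$-category with a group structure (additive, not necessarily abelian) such that $a(x_1,x_2)\otimes a(x_1',x_2')\le a(x_1+x_1',x_2+x_2')$; $V$-homomorphisms are group homomorphisms $f$ with $a(x,x')\le b(f(x),f(x'))$; category $\mathsf{VGrp}$. An equivalence relation on $X$ (internal, given by a pair $t_1,t_2\colon T\to X$ jointly monic, reflexive, symmetric, transitive) is effective if it is the kernel pair of some morphism. A regular monomorphism is a morphism which is an equalizer of some pair of morphisms. *)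

Set Implicit Arguments.
Unset Strict Implicit.

Record quantale := Quantale {
  qcar :> Type;
  qle : qcar -> qcar -> Prop;
  qle_refl : forall x, qle x x;
  qle_trans : forall x y z, qle x y -> qle y z -> qle x z;
  qle_anti : forall x y, qle x y -> qle y x -> x = y;
  qsup : (qcar -> Prop) -> qcar;
  qsup_ub : forall (S : qcar -> Prop) x, S x -> qle x (qsup S);
  qsup_least : forall (S : qcar -> Prop) y, (forall x, S x -> qle x y) -> qle (qsup S) y;
  qten : qcar -> qcar -> qcar;
  qk : qcar;
  qten_assoc : forall x y z, qten x (qten y z) = qten (qten x y) z;
  qten_comm : forall x y, qten x y = qten y x;
  qten_kl : forall x, qten qk x = x;
  (* preserves arbitrary joins in each variable (by commutativity,
     the right variable suffices) *)
  qten_sup : forall a (S : qcar -> Prop),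
      qten a (qsup S) = qsup (fun y => exists x, S x /\ y = qten a x)
}.
Arguments qle {q}.
Arguments qsup {q}.
Arguments qten {q}.
Arguments qk {q}.

Definition qmeet (V : quantale) (a b : V) : V :=
  qsup (fun x => qle x a /\ qle x b).

Definition frame_law (V : quantale) : Prop :=
  forall (a : V) (S : V -> Prop),
    qmeet a (qsup S) = qsup (fun y => exists x, S x /\ y = qmeet a x).

Record vgrp (V : quantale) := VGrp {
  vcar :> Type;
  vdist : vcar -> vcar -> V;
  vzero : vcar;
  vadd : vcar -> vcar -> vcar;
  vopp : vcar -> vcar;
  vaddA : forall x y z, vadd x (vadd y z) = vadd (vadd x y) z;
  vadd0l : forall x, vadd vzero x = x;
  vadd0r : forall x, vadd x vzero = x;
  vaddNl : forall x, vadd (vopp x) x = vzero;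
  vaddNr : forall x, vadd x (vopp x) = vzero;
  vrefl : forall x, qle qk (vdist x x);
  vtrans : forall x y z, qle (qten (vdist x y) (vdist y z)) (vdist x z);
  vcompat : forall x1 x2 y1 y2,
      qle (qten (vdist x1 x2) (vdist y1 y2)) (vdist (vadd x1 y1) (vadd x2 y2))
}.
Arguments vdist {V v}.
Arguments vadd {V v}.

Record vhom (V : quantale) (X Y : vgrp V) := VHom {
  hfun :> X -> Y;
  hadd : forall x y, hfun (vadd x y) = vadd (hfun x) (hfun y);
  hcontr : forall x y, qle (vdist x y) (vdist (hfun x) (hfun y))
}.

Section Cat.
Variable V : quantale.
Notation obj := (vgrp V).

Definition hid (X : obj) : vhom X X.
Proof.
  refine (@VHom V X X (fun x => x) _ _).
  - reflexivity.
  - intros; apply qle_refl.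
Defined.

Definition hcomp (X Y Z : obj) (g : vhom Y Z) (f : vhom X Y) : vhom X Z.
Proof.
  refine (@VHom V X Z (fun x => g (f x)) _ _).
  - intros; rewrite (hadd f), (hadd g); reflexivity.
  - intros; eapply qle_trans; [apply (hcontr f) | apply (hcontr g)].
Defined.

Definition meq (X Y : obj) (f g : vhom X Y) : Prop := forall x, f x = g x.

Definition is_terminal (T : obj) : Prop :=
  forall X : obj, exists h : vhom X T, forall h' : vhom X T, meq h h'.

Definition is_pullback (X Y Z : obj) (f : vhom X Z) (g : vhom Y Z)
    (P : obj) (p1 : vhom P X) (p2 : vhom P Y) : Prop :=
  meq (hcomp f p1) (hcomp g p2) /\
  forall (Q : obj) (q1 : vhom Q X) (q2 : vhom Q Y),
    meq (hcomp f q1) (hcomp g q2) ->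
    exists h : vhom Q P,
      meq (hcomp p1 h) q1 /\ meq (hcomp p2 h) q2 /\
      forall h' : vhom Q P, meq (hcomp p1 h') q1 -> meq (hcomp p2 h') q2 -> meq h h'.

Definition is_kernel_pair (X Y : obj) (f : vhom X Y)
    (P : obj) (p1 p2 : vhom P X) : Prop := is_pullback f f p1 p2.

Definition is_coequalizer (A B C : obj) (u v : vhom A B) (q : vhom B C) : Prop :=
  meq (hcomp q u) (hcomp q v) /\
  forall (D : obj) (g : vhom B D), meq (hcomp g u) (hcomp g v) ->
    exists h : vhom C D, meq (hcomp h q) g /\
      forall h' : vhom C D, meq (hcomp h' q) g -> meq h h'.

Definition is_equalizer (E A B : obj) (u v : vhom A B) (e : vhom E A) : Prop :=
  meq (hcomp u e) (hcomp v e) /\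
  forall (D : obj) (g : vhom D A), meq (hcomp u g) (hcomp v g) ->
    exists h : vhom D E, meq (hcomp e h) g /\
      forall h' : vhom D E, meq (hcomp e h') g -> meq h h'.

Definition regular_epi (B C : obj) (q : vhom B C) : Prop :=
  exists (A : obj) (u v : vhom A B), is_coequalizer u v q.

Definition regular_mono (E A : obj) (e : vhom E A) : Prop :=
  exists (B : obj) (u v : vhom A B), is_equalizer u v e.

Definition is_regular_category : Prop :=
  (exists T : obj, is_terminal T) /\
  (forall (X Y Z : obj) (f : vhom X Z) (g : vhom Y Z),
      exists (P : obj) (p1 : vhom P X) (p2 : vhom P Y), is_pullback f g p1 p2) /\
  (forall (X Y : obj) (f : vhom X Y) (P : obj) (p1 p2 : vhom P X),
      is_kernel_pair f p1 p2 ->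
      exists (C : obj) (q : vhom X C), is_coequalizer p1 p2 q) /\
  (forall (X Y Z : obj) (f : vhom X Z) (g : vhom Y Z)
          (P : obj) (p1 : vhom P X) (p2 : vhom P Y),
      regular_epi f -> is_pullback f g p1 p2 -> regular_epi p2).

Definition jointly_monic (X T : obj) (t1 t2 : vhom T X) : Prop :=
  forall (Q : obj) (g h : vhom Q T),
    meq (hcomp t1 g) (hcomp t1 h) -> meq (hcomp t2 g) (hcomp t2 h) -> meq g h.

Definition reflexive_rel (X T : obj) (t1 t2 : vhom T X) : Prop :=
  exists r : vhom X T, meq (hcomp t1 r) (hid X) /\ meq (hcomp t2 r) (hid X).

Definition symmetric_rel (X T : obj) (t1 t2 : vhom T X) : Prop :=
  exists s : vhom T T, meq (hcomp t1 s) t2 /\ meq (hcomp t2 s) t1.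

Definition transitive_rel (X T : obj) (t1 t2 : vhom T X) : Prop :=
  forall (P : obj) (p1 p2 : vhom P T), is_pullback t2 t1 p1 p2 ->
    exists m : vhom P T, meq (hcomp t1 m) (hcomp t1 p1) /\ meq (hcomp t2 m) (hcomp t2 p2).

Definition is_equiv_rel (X T : obj) (t1 t2 : vhom T X) : Prop :=
  jointly_monic t1 t2 /\ reflexive_rel t1 t2 /\ symmetric_rel t1 t2 /\
  transitive_rel t1 t2.

Definition effective_rel (X T : obj) (t1 t2 : vhom T X) : Prop :=
  exists (Y : obj) (f : vhom X Y), is_kernel_pair f t1 t2.

End Cat.

From Stdlib Require Import ProofIrrelevance FunctionalExtensionality PropExtensionality ClassicalEpsilon.

(* In VGrp the limits and colimits involved are computed pointwise. A pullback is
   the set-theoretic pullback with the meet of the two distances; a regular mono is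
   an injective map whose distance is initial; a regular epi is a surjective map
   whose distance is final, i.e. d(y, y') is below the join of d(x, x') over
   preimages x, x'. The coequalizer of a kernel pair is the image with the final
   distance. Final surjections are stable under pullback because the frame law lets
   the meet with d(y, y') pass through that join.

   If T sits in an effective R through a regular mono, then T is jointly injective
   into X and carries the meet of the two pulled-back distances. Such an
   equivalence relation, automatically a congruence for the group law, is the
   kernel pair of the projection onto the quotient group with the indiscrete
   distance. *)


Section VGroups.
Context {V : quantale}.

(** * Quantales and groups *)

Lemma qten_monor (a b c : V) : qle a b -> qle (qten c a) (qten c b).
Proof.
  intros Hab.
  assert (Eb : b = qsup (fun x => x = a \/ x = b)).
  { apply qle_anti.
    - apply qsup_ub; auto.
    - apply qsup_least; intros x [-> | ->]; auto using qle_refl. }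
  rewrite Eb, qten_sup. apply qsup_ub. exists a; auto.
Qed.

Lemma qten_mono (a b c d : V) : qle a b -> qle c d -> qle (qten a c) (qten b d).
Proof.
  intros Hab Hcd. apply qle_trans with (qten a d).
  - now apply qten_monor.
  - rewrite (qten_comm a), (qten_comm b). now apply qten_monor.
Qed.

Lemma qten_kr (x : V) : qten x qk = x.
Proof. rewrite qten_comm; apply qten_kl. Qed.

Lemma qsup_mono (S T : V -> Prop) : (forall x, S x -> T x) -> qle (qsup S) (qsup T).
Proof. intros H. apply qsup_least. intros x Sx. now apply qsup_ub, H. Qed.

Lemma qten_sup_le (S1 S2 : V -> Prop) (y : V) :
  (forall a b, S1 a -> S2 b -> qle (qten a b) y) -> qle (qten (qsup S1) (qsup S2)) y.
Proof.
  intros H. rewrite qten_sup. apply qsup_least. intros z [b [Hb ->]].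
  rewrite qten_comm, qten_sup. apply qsup_least. intros w [a [Ha ->]].
  rewrite qten_comm. auto.
Qed.

Definition qtop : V := qsup (fun _ => True).

Lemma qle_top (x : V) : qle x qtop.
Proof. apply qsup_ub; exact I. Qed.

Lemma qmeet_lel (a b : V) : qle (qmeet a b) a.
Proof. apply qsup_least; intros x [H _]; exact H. Qed.

Lemma qmeet_ler (a b : V) : qle (qmeet a b) b.
Proof. apply qsup_least; intros x [_ H]; exact H. Qed.

Lemma qmeet_glb (a b c : V) : qle c a -> qle c b -> qle c (qmeet a b).
Proof. intros; apply qsup_ub; auto. Qed.

Lemma vadd_cancel_l {X : vgrp V} (a b c : X) : vadd a b = vadd a c -> b = c.
Proof.
  intros H. apply (f_equal (vadd (vopp a))) in H.
  now rewrite !vaddA, !vaddNl, !vadd0l in H.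
Qed.

Lemma vadd_cancel_r {X : vgrp V} (a b c : X) : vadd a c = vadd b c -> a = b.
Proof.
  intros H. apply (f_equal (fun z => vadd z (vopp c))) in H.
  now rewrite <- !vaddA, !vaddNr, !vadd0r in H.
Qed.

Lemma hom_zero {X Y : vgrp V} (f : vhom X Y) : f (vzero X) = vzero Y.
Proof.
  apply (vadd_cancel_l (f (vzero X))).
  now rewrite <- hadd, !vadd0l, vadd0r.
Qed.

Lemma hom_opp {X Y : vgrp V} (f : vhom X Y) (x : X) : f (vopp x) = vopp (f x).
Proof.
  apply (vadd_cancel_r (f (vopp x)) (vopp (f x)) (f x)).
  rewrite <- hadd, !vaddNl. apply hom_zero.
Qed.

Lemma sig_eq {A : Type} {P : A -> Prop} (a b : {x | P x}) :
  proj1_sig a = proj1_sig b -> a = b.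
Proof. apply eq_sig_hprop; intros; apply proof_irrelevance. Qed.

(** * Limits *)

Section Subgroup.
Variable X : vgrp V.
Variable P : X -> Prop.
Hypothesis P0 : P (vzero X).
Hypothesis Padd : forall x y, P x -> P y -> P (vadd x y).
Hypothesis Popp : forall x, P x -> P (vopp x).

Definition sadd (a b : {x | P x}) : {x | P x} :=
  exist P (vadd (proj1_sig a) (proj1_sig b)) (Padd _ _ (proj2_sig a) (proj2_sig b)).
Definition sopp (a : {x | P x}) : {x | P x} := exist P (vopp (proj1_sig a)) (Popp _ (proj2_sig a)).

Definition subg (d : {x | P x} -> {x | P x} -> V)
  (Hrefl : forall a, qle qk (d a a))
  (Htrans : forall a b c, qle (qten (d a b) (d b c)) (d a c))
  (Hcompat : forall a1 a2 b1 b2,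
      qle (qten (d a1 a2) (d b1 b2)) (d (sadd a1 b1) (sadd a2 b2))) : vgrp V.
Proof.
  refine (@VGrp V {x | P x} d (exist P (vzero X) P0) sadd sopp _ _ _ _ _ Hrefl Htrans Hcompat);
    intros; apply sig_eq; simpl.
  - apply vaddA.
  - apply vadd0l.
  - apply vadd0r.
  - apply vaddNl.
  - apply vaddNr.
Defined.

Definition subr : vgrp V :=
  subg (fun a b => vdist (proj1_sig a) (proj1_sig b))
    (fun _ => vrefl _) (fun _ _ _ => vtrans _ _ _) (fun _ _ _ _ => vcompat _ _ _ _).

Definition subr_lift {W : vgrp V} (h : vhom W X) (Hh : forall w, P (h w)) : vhom W subr.
Proof.
  refine (@VHom V W subr (fun w => exist P (h w) (Hh w)) _ _).
  - intros w w'. apply sig_eq, hadd.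
  - intros w w'. apply hcontr.
Defined.
End Subgroup.
Arguments subg {X P} P0 Padd Popp d Hrefl Htrans Hcompat.
Arguments subr {X P} P0 Padd Popp.
Arguments subr_lift {X P} P0 Padd Popp {W} h Hh.

Definition prodg (X Y : vgrp V) : vgrp V.
Proof.
  refine (@VGrp V (X * Y)%type
    (fun p q => qmeet (vdist (fst p) (fst q)) (vdist (snd p) (snd q)))
    (vzero X, vzero Y)
    (fun p q => (vadd (fst p) (fst q), vadd (snd p) (snd q)))
    (fun p => (vopp (fst p), vopp (snd p))) _ _ _ _ _ _ _ _).
  - intros [] [] []; simpl; now rewrite !vaddA.
  - intros []; simpl; now rewrite !vadd0l.
  - intros []; simpl; now rewrite !vadd0r.
  - intros []; simpl; now rewrite !vaddNl.
  - intros []; simpl; now rewrite !vaddNr.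
  - intros; apply qmeet_glb; apply vrefl.
  - intros; apply qmeet_glb; eapply qle_trans; try apply vtrans;
      apply qten_mono; (apply qmeet_lel || apply qmeet_ler).
  - intros; apply qmeet_glb; eapply qle_trans; try apply vcompat;
      apply qten_mono; (apply qmeet_lel || apply qmeet_ler).
Defined.

Section Pullback.
Variables X Y Z : vgrp V.
Variables (f : vhom X Z) (g : vhom Y Z).

Definition Pb : vgrp V.
Proof.
  refine (@subr (prodg X Y) (fun p => f (fst p) = g (snd p)) _ _ _); simpl.
  - now rewrite !hom_zero.
  - intros [] [] H1 H2; simpl in *. now rewrite !hadd, H1, H2.
  - intros [] H; simpl in *. now rewrite !hom_opp, H.
Defined.

Definition pb1 : vhom Pb X :=
  @VHom V Pb X (fun a => fst (proj1_sig a)) (fun _ _ => eq_refl) (fun _ _ => qmeet_lel _ _).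

Definition pb2 : vhom Pb Y :=
  @VHom V Pb Y (fun a => snd (proj1_sig a)) (fun _ _ => eq_refl) (fun _ _ => qmeet_ler _ _).
End Pullback.
Arguments Pb {X Y Z} f g.
Arguments pb1 {X Y Z} f g.
Arguments pb2 {X Y Z} f g.

Definition jointly_injective {P X Y : vgrp V} (p1 : vhom P X) (p2 : vhom P Y) : Prop :=
  forall p p', p1 p = p1 p' -> p2 p = p2 p' -> p = p'.

Definition initial2 {P X Y : vgrp V} (p1 : vhom P X) (p2 : vhom P Y) : Prop :=
  forall p p', qle (qmeet (vdist (p1 p) (p1 p')) (vdist (p2 p) (p2 p'))) (vdist p p').

Lemma pullback_of_pointwise {X Y Z P : vgrp V} (f : vhom X Z) (g : vhom Y Z)
    (p1 : vhom P X) (p2 : vhom P Y) :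
  meq (hcomp f p1) (hcomp g p2) ->
  (forall x y, f x = g y -> exists p, p1 p = x /\ p2 p = y) ->
  jointly_injective p1 p2 -> initial2 p1 p2 -> is_pullback f g p1 p2.
Proof.
  intros Hc Hpairs Hinj Hinit. split; [exact Hc |].
  intros Q q1 q2 Hq.
  pose (sel w := proj1_sig (constructive_indefinite_description _ (Hpairs _ _ (Hq w)))).
  assert (Hsel : forall w, p1 (sel w) = q1 w /\ p2 (sel w) = q2 w).
  { intros w. unfold sel. now destruct constructive_indefinite_description. }
  assert (Hadd : forall w w', sel (vadd w w') = vadd (sel w) (sel w')).
  { intros w w'. apply Hinj; rewrite hadd.
    - now rewrite !(proj1 (Hsel _)), hadd.
    - now rewrite !(proj2 (Hsel _)), hadd. }
  assert (Hcontr : forall w w', qle (vdist w w') (vdist (sel w) (sel w'))).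
  { intros w w'. eapply qle_trans; [| apply Hinit].
    rewrite !(proj1 (Hsel _)), !(proj2 (Hsel _)).
    apply qmeet_glb; apply hcontr. }
  exists (@VHom V Q P sel Hadd Hcontr). split; [| split].
  - intros w. apply Hsel.
  - intros w. apply Hsel.
  - intros h' H1 H2 w. simpl. apply Hinj.
    + now rewrite (proj1 (Hsel w)), <- (H1 w).
    + now rewrite (proj2 (Hsel w)), <- (H2 w).
Qed.

Lemma pb_is_pullback {X Y Z : vgrp V} (f : vhom X Z) (g : vhom Y Z) :
  is_pullback f g (pb1 f g) (pb2 f g).
Proof.
  apply pullback_of_pointwise.
  - intros a. exact (proj2_sig a).
  - intros x y e. now exists (exist _ (x, y) e).
  - intros [[x y] e] [[x' y'] e'] H1 H2. apply sig_eq. simpl in *. congruence.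
  - intros p p'. apply qle_refl.
Qed.

Lemma pullback_mono {X Y Z P Q : vgrp V} {f : vhom X Z} {g : vhom Y Z}
    {p1 : vhom P X} {p2 : vhom P Y} (HP : is_pullback f g p1 p2) (h h' : vhom Q P) :
  meq (hcomp p1 h) (hcomp p1 h') -> meq (hcomp p2 h) (hcomp p2 h') -> meq h h'.
Proof.
  intros H1 H2. destruct HP as [Hc Hu].
  destruct (Hu Q (hcomp p1 h) (hcomp p2 h)) as [k [_ [_ Hk]]].
  { intros w. apply Hc. }
  intros w. rewrite <- (Hk h (fun _ => eq_refl) (fun _ => eq_refl) w).
  apply Hk; intros x; symmetry; [apply H1 | apply H2].
Qed.

Lemma pullback_pointwise {X Y Z P : vgrp V} {f : vhom X Z} {g : vhom Y Z}
    {p1 : vhom P X} {p2 : vhom P Y} :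
  is_pullback f g p1 p2 ->
  (forall x y, f x = g y -> exists p, p1 p = x /\ p2 p = y) /\
  jointly_injective p1 p2 /\ initial2 p1 p2.
Proof.
  intros HP.
  destruct (proj2 HP _ _ _ (proj1 (pb_is_pullback f g))) as [h [Hh1 [Hh2 _]]].
  destruct (proj2 (pb_is_pullback f g) _ _ _ (proj1 HP)) as [k [Hk1 [Hk2 _]]].
  assert (Hhk : meq (hcomp h k) (hid P)).
  { apply (pullback_mono HP); intros p.
    - exact (eq_trans (Hh1 (k p)) (Hk1 p)).
    - exact (eq_trans (Hh2 (k p)) (Hk2 p)). }
  unfold meq in *; simpl in *.
  split; [| split].
  - intros x y e. exists (h (exist _ (x, y) e)). split; [apply Hh1 | apply Hh2].
  - intros p p' e1 e2. rewrite <- (Hhk p), <- (Hhk p'). f_equal.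
    apply sig_eq, injective_projections; rewrite ?Hk1, ?Hk2; assumption.
  - intros p p'. pose proof (hcontr h (k p) (k p')) as E. simpl in E.
    now rewrite !Hhk, !Hk1, !Hk2 in E.
Qed.

Definition injective {X Y : vgrp V} (f : vhom X Y) : Prop :=
  forall x x', f x = f x' -> x = x'.

Definition initial {X Y : vgrp V} (f : vhom X Y) : Prop :=
  forall x x', qle (vdist (f x) (f x')) (vdist x x').

Section Equalizer.
Variables (A B : vgrp V) (u v : vhom A B).

Definition Eqz : vgrp V.
Proof.
  refine (@subr A (fun a => u a = v a) _ _ _).
  - now rewrite !hom_zero.
  - intros x y Hx Hy. now rewrite !hadd, Hx, Hy.
  - intros x Hx. now rewrite !hom_opp, Hx.
Defined.

Definition eqz_incl : vhom Eqz A :=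
  @VHom V Eqz A (@proj1_sig _ _) (fun _ _ => eq_refl) (fun _ _ => qle_refl _).
End Equalizer.
Arguments Eqz {A B} u v.
Arguments eqz_incl {A B} u v.

Lemma equalizer_mono {E A B D : vgrp V} {u v : vhom A B} {e : vhom E A}
    (He : is_equalizer u v e) (h h' : vhom D E) :
  meq (hcomp e h) (hcomp e h') -> meq h h'.
Proof.
  intros Hhh. destruct He as [Hc Hu].
  destruct (Hu D (hcomp e h)) as [k [_ Hk]].
  { intros w. apply Hc. }
  intros w. rewrite <- (Hk h (fun _ => eq_refl) w).
  apply Hk. intros x. symmetry. apply Hhh.
Qed.

Lemma regular_mono_pointwise {E A : vgrp V} (e : vhom E A) :
  regular_mono e -> injective e /\ initial e.
Proof.
  intros [B [u [v He]]].
  destruct (proj2 He (Eqz u v) (eqz_incl u v)) as [h [Hh _]].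
  { intros w. exact (proj2_sig w). }
  pose (k := subr_lift _ _ _ e (proj1 He) : vhom E (Eqz u v)).
  assert (Hhk : meq (hcomp h k) (hid E)).
  { apply (equalizer_mono He). intros a. exact (Hh (k a)). }
  unfold meq in Hhk; simpl in Hhk.
  split.
  - intros a b Hab. rewrite <- (Hhk a), <- (Hhk b). f_equal. now apply sig_eq.
  - intros a b. pose proof (hcontr h (k a) (k b)) as Hd. simpl in Hd.
    now rewrite !Hhk in Hd.
Qed.

(** * Images and regular epimorphisms *)

Definition surjective {X Y : vgrp V} (f : vhom X Y) : Prop := forall y, exists x, f x = y.

Definition final_dist {X Y : vgrp V} (f : vhom X Y) (y y' : Y) : V :=
  qsup (fun a => exists x x', f x = y /\ f x' = y' /\ a = vdist x x').

Definition final {X Y : vgrp V} (f : vhom X Y) : Prop :=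
  forall y y', qle (vdist y y') (final_dist f y y').

Section Image.
Variables (X Y : vgrp V) (f : vhom X Y).

Lemma le_final_dist (x x' : X) : qle (vdist x x') (final_dist f (f x) (f x')).
Proof. apply qsup_ub. now exists x, x'. Qed.

Lemma final_dist_le (y y' : Y) : qle (final_dist f y y') (vdist y y').
Proof.
  apply qsup_least. intros a [x [x' [<- [<- ->]]]]. apply hcontr.
Qed.

Lemma final_dist_trans (y y' y'' : Y) :
  qle (qten (final_dist f y y') (final_dist f y' y'')) (final_dist f y y'').
Proof.
  apply qten_sup_le. intros a b [x [x1 [<- [e1 ->]]]] [x2 [x' [e2 [<- ->]]]].
  (* [n] lies in the kernel of [f]; translating by it makes the middle representatives agree. *)
  set (n := vadd (vopp x1) x2).
  assert (Hn : f n = vzero Y).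
  { unfold n. now rewrite hadd, hom_opp, e1, <- e2, vaddNl. }
  assert (Hx1n : vadd x1 n = x2).
  { unfold n. now rewrite vaddA, vaddNr, vadd0l. }
  apply qle_trans with (qten (vdist (vadd x n) x2) (vdist x2 x')).
  - apply qten_mono; [| apply qle_refl].
    rewrite <- Hx1n. eapply qle_trans; [| apply vcompat].
    rewrite <- (qten_kr (vdist x x1)) at 1. apply qten_monor, vrefl.
  - eapply qle_trans; [apply vtrans |].
    replace (f x) with (f (vadd x n)) by now rewrite hadd, Hn, vadd0r.
    apply le_final_dist.
Qed.

Lemma final_dist_compat (y1 y2 z1 z2 : Y) :
  qle (qten (final_dist f y1 y2) (final_dist f z1 z2))
      (final_dist f (vadd y1 z1) (vadd y2 z2)).
Proof.
  apply qten_sup_le. intros a b [x1 [x2 [<- [<- ->]]]] [x1' [x2' [<- [<- ->]]]].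
  eapply qle_trans; [apply vcompat |].
  rewrite <- !hadd. apply le_final_dist.
Qed.

Definition Im : vgrp V.
Proof.
  unshelve refine (@subg Y (fun y => exists x, f x = y) _ _ _
            (fun c c' => final_dist f (proj1_sig c) (proj1_sig c')) _ _ _).
  - intros y y' [x <-] [x' <-]. exists (vadd x x'). apply hadd.
  - exists (vzero X). apply hom_zero.
  - intros y [x <-]. exists (vopp x). apply hom_opp.
  - intros [y [x <-]]. eapply qle_trans; [apply (vrefl x) | apply le_final_dist].
  - intros; apply final_dist_trans.
  - intros; apply final_dist_compat.
Defined.

Definition corestr : vhom X Im.
Proof.
  refine (@VHom V X Im (fun x => exist _ (f x) (ex_intro _ x eq_refl)) _ _).
  - intros x x'. apply sig_eq, hadd.
  - intros x x'. apply le_final_dist.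
Defined.

Definition im_incl : vhom Im Y :=
  @VHom V Im Y (@proj1_sig _ _) (fun _ _ => eq_refl) (fun _ _ => final_dist_le _ _).

Lemma corestr_surjective : surjective corestr.
Proof. intros [y [x e]]. exists x. now apply sig_eq. Qed.

Lemma corestr_final : final corestr.
Proof.
  intros c c'. apply qsup_mono. intros a [x [x' [e [e' ->]]]].
  exists x, x'. split; [| split]; now try apply sig_eq.
Qed.
End Image.
Arguments Im {X Y} f.
Arguments corestr {X Y} f.
Arguments im_incl {X Y} f.

Lemma coequalizer_of_final {A X Z : vgrp V} (u v : vhom A X) (f : vhom X Z) :
  surjective f -> final f -> meq (hcomp f u) (hcomp f v) ->
  (forall x x', f x = f x' -> exists a, u a = x /\ v a = x') ->
  is_coequalizer u v f.
Proof.
  intros Hs Hf Huv Hker. split; [exact Huv |]. intros D g Hg.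
  assert (Hgf : forall x x', f x = f x' -> g x = g x').
  { intros x x' e. destruct (Hker x x' e) as [a [<- <-]]. apply Hg. }
  pose (s z := proj1_sig (constructive_indefinite_description _ (Hs z))).
  assert (Hfs : forall z, f (s z) = z).
  { intros z. unfold s. now destruct constructive_indefinite_description. }
  assert (Hadd : forall z z', g (s (vadd z z')) = vadd (g (s z)) (g (s z'))).
  { intros z z'. rewrite <- hadd. apply Hgf. now rewrite !hadd, !Hfs. }
  assert (Hcontr : forall z z', qle (vdist z z') (vdist (g (s z)) (g (s z')))).
  { intros z z'. eapply qle_trans; [apply Hf |]. apply qsup_least.
    intros a [x [x' [e [e' ->]]]].
    rewrite <- (Hgf x (s z)), <- (Hgf x' (s z')) by now rewrite Hfs.
    apply hcontr. }
  exists (@VHom V Z D (fun z => g (s z)) Hadd Hcontr). split.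
  - intros x. apply Hgf. now rewrite Hfs.
  - intros h' Hh z. simpl. rewrite <- (Hh (s z)). simpl. now rewrite Hfs.
Qed.

Lemma coequalizer_epi {A B C D : vgrp V} {u v : vhom A B} {q : vhom B C}
    (Hq : is_coequalizer u v q) (h h' : vhom C D) :
  meq (hcomp h q) (hcomp h' q) -> meq h h'.
Proof.
  intros Hhh. destruct Hq as [Hc Hu].
  destruct (Hu D (hcomp h q)) as [k [_ Hk]].
  { intros a. exact (f_equal h (Hc a)). }
  intros w. rewrite <- (Hk h (fun _ => eq_refl) w).
  apply Hk. intros x. symmetry. apply Hhh.
Qed.

Lemma regular_epi_pointwise {X Z : vgrp V} (f : vhom X Z) :
  regular_epi f -> surjective f /\ final f.
Proof.
  intros [A [u [v Hf]]].
  destruct (proj2 Hf (Im f) (corestr f)) as [h [Hh _]].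
  { intros a. apply sig_eq. exact (proj1 Hf a). }
  assert (Hih : meq (hcomp (im_incl f) h) (hid Z)).
  { apply (coequalizer_epi Hf). intros x. exact (f_equal (@proj1_sig _ _) (Hh x)). }
  unfold meq in Hih; simpl in Hih.
  split.
  - intros z. destruct (proj2_sig (h z)) as [x e]. exists x. now rewrite e, Hih.
  - intros z z'. eapply qle_trans; [apply (hcontr h) |]. simpl.
    rewrite !Hih. apply qle_refl.
Qed.

(** * Regularity *)

Definition unitg : vgrp V.
Proof.
  refine (@VGrp V unit (fun _ _ => qtop) tt (fun _ _ => tt) (fun _ => tt)
            _ _ _ _ _ _ _ _); intros;
    solve [apply qle_top | now repeat match goal with u : unit |- _ => destruct u end].
Defined.

Lemma unitg_terminal : is_terminal unitg.
Proof.
  intros X.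
  exists (@VHom V X unitg (fun _ => tt) (fun _ _ => eq_refl) (fun _ _ => qle_top _)).
  intros h' x. now destruct (h' x).
Qed.

Lemma kernel_pair_coequalizer {X Y P : vgrp V} (f : vhom X Y) (p1 p2 : vhom P X) :
  is_kernel_pair f p1 p2 -> is_coequalizer p1 p2 (corestr f).
Proof.
  intros Hk. destruct (pullback_pointwise Hk) as [Hpairs _].
  apply coequalizer_of_final.
  - apply corestr_surjective.
  - apply corestr_final.
  - intros a. apply sig_eq. exact (proj1 Hk a).
  - intros x x' e. apply Hpairs. exact (f_equal (@proj1_sig _ _) e).
Qed.

Lemma regular_epi_of_final {X Z : vgrp V} (f : vhom X Z) :
  surjective f -> final f -> regular_epi f.
Proof.
  intros Hs Hf. exists (Pb f f), (pb1 f f), (pb2 f f).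
  apply coequalizer_of_final; [exact Hs | exact Hf | |].
  - intros a. exact (proj2_sig a).
  - intros x x' e. now exists (exist _ (x, x') e).
Qed.

Lemma surjective_pullback {X Y Z P : vgrp V} {f : vhom X Z} {g : vhom Y Z}
    {p1 : vhom P X} {p2 : vhom P Y} :
  is_pullback f g p1 p2 -> surjective f -> surjective p2.
Proof.
  intros HP Hs y. destruct (Hs (g y)) as [x e].
  destruct (proj1 (pullback_pointwise HP) x y e) as [p [_ Hp]]. now exists p.
Qed.

Lemma final_pullback (HV : frame_law V) {X Y Z P : vgrp V} {f : vhom X Z} {g : vhom Y Z}
    {p1 : vhom P X} {p2 : vhom P Y} :
  is_pullback f g p1 p2 -> final f -> final p2.
Proof.
  intros HP Hf y y'.
  destruct (pullback_pointwise HP) as [Hpairs [_ Hinit]].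
  assert (Hd : qle (vdist y y') (qmeet (vdist y y') (final_dist f (g y) (g y')))).
  { apply qmeet_glb; [apply qle_refl |].
    eapply qle_trans; [apply (hcontr g) | apply Hf]. }
  unfold final_dist in Hd. rewrite HV in Hd.
  eapply qle_trans; [exact Hd |]. apply qsup_least.
  intros a [b [[x [x' [e [e' ->]]]] ->]].
  destruct (Hpairs x y e) as [p [Hp1 Hp2]].
  destruct (Hpairs x' y' e') as [p' [Hp1' Hp2']].
  apply qle_trans with (vdist p p').
  - eapply qle_trans; [| apply Hinit]. rewrite Hp1, Hp2, Hp1', Hp2'.
    apply qmeet_glb; [apply qmeet_ler | apply qmeet_lel].
  - apply qsup_ub. now exists p, p'.
Qed.

Lemma vgrp_regular (HV : frame_law V) : is_regular_category V.
Proof.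
  split; [| split; [| split]].
  - exists unitg. apply unitg_terminal.
  - intros X Y Z f g. exists (Pb f g), (pb1 f g), (pb2 f g). apply pb_is_pullback.
  - intros X Y f P p1 p2 Hk. exists (Im f), (corestr f). now apply kernel_pair_coequalizer.
  - intros X Y Z f g P p1 p2 Hf HP.
    destruct (regular_epi_pointwise f Hf) as [Hs Hfin].
    apply regular_epi_of_final.
    + exact (surjective_pullback HP Hs).
    + exact (final_pullback HV HP Hfin).
Qed.

(** * Effective equivalence relations *)

Section Quotient.
Variable X : vgrp V.
Variable rel : X -> X -> Prop.
Hypothesis rel_refl : forall x, rel x x.
Hypothesis rel_sym : forall x y, rel x y -> rel y x.
Hypothesis rel_trans : forall x y z, rel x y -> rel y z -> rel x z.
Hypothesis rel_add : forall x x' y y', rel x x' -> rel y y' -> rel (vadd x y) (vadd x' y').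

Definition rep (x : X) : X := epsilon (inhabits (vzero X)) (rel x).

Lemma rel_rep x : rel x (rep x).
Proof. unfold rep. apply epsilon_spec. now exists x. Qed.

Lemma rep_eq x y : rel x y -> rep x = rep y.
Proof.
  intros Hxy. unfold rep. f_equal.
  apply functional_extensionality; intros z.
  apply propositional_extensionality; split; eauto.
Qed.

Lemma rel_of_rep_eq x y : rep x = rep y -> rel x y.
Proof.
  intros E. apply rel_trans with (rep x); [apply rel_rep |].
  rewrite E. apply rel_sym, rel_rep.
Qed.

Lemma rep_idem x : rep (rep x) = rep x.
Proof. symmetry. apply rep_eq, rel_rep. Qed.

Lemma rep_addl x y : rep (vadd (rep x) y) = rep (vadd x y).
Proof. apply rep_eq, rel_add; [apply rel_sym, rel_rep | apply rel_refl]. Qed.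

Lemma rep_addr x y : rep (vadd x (rep y)) = rep (vadd x y).
Proof. apply rep_eq, rel_add; [apply rel_refl | apply rel_sym, rel_rep]. Qed.

Definition quot : vgrp V.
Proof.
  refine (@VGrp V {x : X | rep x = x} (fun _ _ => qtop)
    (exist _ (rep (vzero X)) (rep_idem _))
    (fun a b => exist _ (rep (vadd (proj1_sig a) (proj1_sig b))) (rep_idem _))
    (fun a => exist _ (rep (vopp (proj1_sig a))) (rep_idem _)) _ _ _ _ _ _ _ _);
    try (intros; apply qle_top).
  - intros [a Ha] [b Hb] [c Hc]; apply sig_eq; simpl.
    now rewrite rep_addr, rep_addl, vaddA.
  - intros [a Ha]; apply sig_eq; simpl. now rewrite rep_addl, vadd0l.
  - intros [a Ha]; apply sig_eq; simpl. now rewrite rep_addr, vadd0r.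
  - intros [a Ha]; apply sig_eq; simpl. now rewrite rep_addl, vaddNl.
  - intros [a Ha]; apply sig_eq; simpl. now rewrite rep_addr, vaddNr.
Defined.

Definition qproj : vhom X quot.
Proof.
  refine (@VHom V X quot (fun x => exist _ (rep x) (rep_idem x)) _ (fun _ _ => qle_top _)).
  intros x y. apply sig_eq; simpl. now rewrite rep_addl, rep_addr.
Defined.

Lemma qproj_eq x y : qproj x = qproj y <-> rel x y.
Proof.
  split.
  - intros E. apply rel_of_rep_eq. exact (f_equal (@proj1_sig _ _) E).
  - intros Hxy. apply sig_eq, rep_eq, Hxy.
Qed.
End Quotient.
Arguments quot {X rel} rel_refl rel_sym rel_trans rel_add.
Arguments qproj {X rel} rel_refl rel_sym rel_trans rel_add.
Arguments qproj_eq {X rel} rel_refl rel_sym rel_trans rel_add x y.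

Definition rel_of {T X : vgrp V} (t1 t2 : vhom T X) (x y : X) : Prop :=
  exists t, t1 t = x /\ t2 t = y.

Section Relation.
Variables (X T : vgrp V) (t1 t2 : vhom T X).

Lemma rel_of_refl : reflexive_rel t1 t2 -> forall x, rel_of t1 t2 x x.
Proof. intros [r [Hr1 Hr2]] x. exists (r x). split; [apply Hr1 | apply Hr2]. Qed.

Lemma rel_of_sym : symmetric_rel t1 t2 -> forall x y, rel_of t1 t2 x y -> rel_of t1 t2 y x.
Proof.
  intros [s [Hs1 Hs2]] x y [t [<- <-]]. exists (s t). split; [apply Hs1 | apply Hs2].
Qed.

Lemma rel_of_trans : transitive_rel t1 t2 ->
  forall x y z, rel_of t1 t2 x y -> rel_of t1 t2 y z -> rel_of t1 t2 x z.
Proof.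
  intros Htr x y z [t [<- e]] [t' [e' <-]].
  destruct (Htr _ _ _ (pb_is_pullback t2 t1)) as [m [Hm1 Hm2]].
  assert (e0 : t2 t = t1 t') by congruence.
  exists (m (exist _ (t, t') e0)). split; [apply Hm1 | apply Hm2].
Qed.

Lemma rel_of_add x x' y y' :
  rel_of t1 t2 x x' -> rel_of t1 t2 y y' -> rel_of t1 t2 (vadd x y) (vadd x' y').
Proof.
  intros [t [<- <-]] [t' [<- <-]]. exists (vadd t t'). split; apply hadd.
Qed.

Lemma effective_of_pointwise :
  is_equiv_rel t1 t2 -> jointly_injective t1 t2 -> initial2 t1 t2 -> effective_rel t1 t2.
Proof.
  intros [_ [Hrefl [Hsym Htrans]]] Hinj Hinit.
  pose proof (qproj_eq (rel_of_refl Hrefl) (rel_of_sym Hsym) (rel_of_trans Htrans) rel_of_add)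
    as Hq.
  eexists _, _. apply pullback_of_pointwise; [| | exact Hinj | exact Hinit].
  - intros t. apply Hq. now exists t.
  - intros x y e. now apply Hq in e.
Qed.
End Relation.

End VGroups.

Theorem proposition4p4 (V : quantale) (HV : frame_law V) :
  is_regular_category V /\
  (forall (X R T : vgrp V) (r1 r2 : vhom R X) (t1 t2 : vhom T X) (j : vhom T R),
     is_equiv_rel r1 r2 -> effective_rel r1 r2 ->
     is_equiv_rel t1 t2 ->
     regular_mono j -> meq (hcomp r1 j) t1 -> meq (hcomp r2 j) t2 ->
     effective_rel t1 t2).
Proof.
  split; [exact (vgrp_regular HV) |].
  intros X R T r1 r2 t1 t2 j _ [Y [f HR]] HT Hj Hj1 Hj2.
  destruct (pullback_pointwise HR) as [_ [Rinj Rinit]].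
  destruct (regular_mono_pointwise j Hj) as [jinj jinit].
  unfold meq in Hj1, Hj2; simpl in Hj1, Hj2.
  apply effective_of_pointwise; [exact HT | |].
  - intros a b e1 e2. apply jinj, Rinj; now rewrite ?Hj1, ?Hj2.
  - intros a b. eapply qle_trans; [| apply jinit]. eapply qle_trans; [| apply Rinit].
    rewrite !Hj1, !Hj2. apply qle_refl.
Qed.
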